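(* Let $f\in\mathbb{K}_C[[\underline{x}]][y]$ be a free polynomial of degree $n$ with characteristic exponents $m_1<\dots<m_h$, and let $r_0^1,\dots,r_0^e,r_1,\dots,r_h$ and $e_1,\dots,e_h$ be as in the context. Let $\underline{\alpha}=(\alpha_0^1,\dots,\alpha_0^e,\alpha_1,\dots,\alpha_h)$ and $\underline{\beta}=(\beta_0^1,\dots,\beta_0^e,\beta_1,\dots,\beta_h)$ be elements of $\mathbb{Z}^e\times\mathbb{N}^h$ with $0\le\alpha_i,\beta_i<e_i$ for all $i\in\{1,\dots,h\}$. If $\sum_{i=1}^e\alpha_0^ir_0^i+\sum_{j=1}^h\alpha_jr_j=\sum_{i=1}^e\beta_0^ir_0^i+\sum_{j=1}^h\beta_jr_j$, then $\underline{\alpha}=\underline{\beta}$.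
   Context: $\mathbb{K}$ is an algebraically closed field of characteristic $0$, $\underline{x}=(x_1,\dots,x_e)$. $C\subseteq\mathbb{R}^e$ is a line free cone (nonnegative real combinations of finitely many vectors of $\mathbb{Q}^e$, with $v\in C\setminus\{0\}\Rightarrow -v\notin C$). $\mathbb{K}_C[[\underline{x}]]$ is the ring of formal series with exponents in $C\cap\mathbb{Z}^e$; $\mathbb{K}_C[[\underline{x}^{1/N}]]$ the ring of series $\sum a_p\underline{x}^{p/N}$, $p\in\mathbb{Z}^e$, $p/N\in C$. Fix a total additive order $\le$ on $\mathbb{Z}^e$ compatible with $C$, extended to $\mathbb{Q}^e$ by clearing denominators; $O(z)$ is the $\le$-least exponent of a nonzero series $z$. A monic $g\in\mathbb{K}_C[[\underline{x}]][y]$ of degree $N$ is free if irreducible in $\mathbb{K}_C[[\underline{x}]][y]$ with a root in $\mathbb{K}_C[[\underline{x}^{1/N}]]$. The roots $y_1,\dots,y_n$ of $f$ lie in $\mathbb{K}_C[[\underline{x}^{1/n}]]$; characteristic exponents are the $m\in\mathbb{Z}^e$ with $m/n=O(y_i-y_j)$ for some $y_i\ne y_j$. Sequences: $D_1=n^e$, $D_{i+1}$ the gcd of the $e\times e$ minors of $(nI_e,m_1^T,\dots,m_i^T)$ ($1\le i\le h$); $e_i=D_i/D_{i+1}$; $r_0^k=n\varepsilon_k$ where $\varepsilon_1,\dots,\varepsilon_e$ is the standard basis of $\mathbb{Z}^e$; $r_1=m_1$, $r_i=e_{i-1}r_{i-1}+m_i-m_{i-1}$ ($2\le i\le h$). 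*)

From HB Require Import structures.
From mathcomp Require Import all_boot all_order all_algebra.
From mathcomp Require Import boolp classical_sets fsbigop.
From mathcomp Require Import Rstruct.
Set Implicit Arguments.
Unset Strict Implicit.
Unset Printing Implicit Defensive.
Import Order.TTheory GRing.Theory Num.Theory.
Local Open Scope ring_scope.

Section Defs.
Variable e : nat.

Definition realvec_of_rat (v : 'rV[rat]_e) : 'rV[Rdefinitions.R]_e := map_mx ratr v.
Definition realvec_of_int (v : 'rV[int]_e) : 'rV[Rdefinitions.R]_e :=
  map_mx (fun z : int => z%:~R) v.

Definition in_cone (gens : seq 'rV[rat]_e) (v : 'rV[Rdefinitions.R]_e) : Prop :=
  exists c : 'I_(size gens) -> Rdefinitions.R,
    (forall i, 0 <= c i) /\ v = \sum_(i < size gens) c i *: realvec_of_rat gens`_i.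

Definition line_free (gens : seq 'rV[rat]_e) : Prop :=
  forall v, in_cone gens v -> v != 0 -> ~ in_cone gens (- v).

Definition additive_total_order (le : rel 'rV[int]_e) : Prop :=
  [/\ reflexive le, antisymmetric le, transitive le, total le &
      forall a b c, le a b -> le (a + c) (b + c)].

Definition compatible_order (gens : seq 'rV[rat]_e) (le : rel 'rV[int]_e) : Prop :=
  forall p : 'rV[int]_e, in_cone gens (realvec_of_int p) -> le 0 p.

(* ---------- formal series.  A series s in K_C[[x^{1/N}]] is represented by
   its coefficient function p |-> a_p (coefficient of x^{p/N}), p in Z^e. *)
Variable K : fieldType.
Definition series := 'rV[int]_e -> K.

Definition in_series (gens : seq 'rV[rat]_e) (N : nat) (s : series) : Prop :=
  forall p, s p != 0 -> in_cone gens ((N%:R)^-1 *: realvec_of_int p).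

Definition szero : series := fun _ => 0.
Definition sone : series := fun p => if p == 0 then 1 else 0.
Definition sadd (s t : series) : series := fun p => s p + t p.
Definition ssub (s t : series) : series := fun p => s p - t p.
(* product: (s t)_p = sum_{a + b = p} s_a t_b  (a finite sum for series with
   exponents in a line free cone) *)
Definition smul (s t : series) : series :=
  fun p => \sum_(a \in [set: 'rV[int]_e]) s a * t (p - a).
Fixpoint spow (s : series) (k : nat) : series :=
  if k is k'.+1 then smul s (spow s k') else sone.

(* embedding K_C[[x]] -> K_C[[x^{1/N}]] : x^q |-> x^{Nq/N} *)
Definition sembed (N : nat) (c : series) : series :=
  fun p => if [forall k, (N%:Z %| p ord0 k)%Z]
           then c (map_mx (fun z : int => (z %/ N%:Z)%Z) p) else 0.

(* ---------- polynomials in y over series: coefficient lists, low degree first *)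
Definition spoly := seq series.
Definition pcoef (f : spoly) (k : nat) : series := nth szero f k.
Definition peq (f g : spoly) : Prop := forall k, pcoef f k = pcoef g k.
Definition pone : spoly := [:: sone].
Definition pmul (f g : spoly) : spoly :=
  mkseq (fun k p => \sum_(i < k.+1) smul (pcoef f i) (pcoef g (k - i)) p)
        (size f + size g).

Definition in_spoly (gens : seq 'rV[rat]_e) (f : spoly) : Prop :=
  forall k, in_series gens 1 (pcoef f k).

Definition monic_deg (f : spoly) (N : nat) : Prop :=
  size f = N.+1 /\ pcoef f N = sone.

Definition is_unit (gens : seq 'rV[rat]_e) (f : spoly) : Prop :=
  exists g, in_spoly gens g /\ peq (pmul f g) pone.

Definition irreducible_sp (gens : seq 'rV[rat]_e) (f : spoly) : Prop :=
  in_spoly gens f /\ ~ is_unit gens f /\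
  forall g h, in_spoly gens g -> in_spoly gens h -> peq f (pmul g h) ->
    is_unit gens g \/ is_unit gens h.

Definition peval (N : nat) (f : spoly) (z : series) : series :=
  fun p => \sum_(k < size f) smul (sembed N (pcoef f k)) (spow z k) p.

Definition is_root (gens : seq 'rV[rat]_e) (N : nat) (f : spoly) (z : series) : Prop :=
  in_series gens N z /\ peval N f z = szero.

Definition free_poly (gens : seq 'rV[rat]_e) (f : spoly) (N : nat) : Prop :=
  monic_deg f N /\ irreducible_sp gens f /\ exists z, is_root gens N f z.

Definition least_exp (le : rel 'rV[int]_e) (z : series) (m : 'rV[int]_e) : Prop :=
  z m != 0 /\ forall q, z q != 0 -> le m q.

(* m is a characteristic exponent of f (degree n): m/n = O(y_i - y_j) for
   distinct roots y_i, y_j in K_C[[x^{1/n}]] *)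
Definition char_exp (gens : seq 'rV[rat]_e) (le : rel 'rV[int]_e)
  (f : spoly) (n : nat) (m : 'rV[int]_e) : Prop :=
  exists y1 y2, is_root gens n f y1 /\ is_root gens n f y2 /\ y1 <> y2 /\
    least_exp le (ssub y1 y2) m.

Definition char_exps (gens : seq 'rV[rat]_e) (le : rel 'rV[int]_e)
  (f : spoly) (n : nat) (ms : seq 'rV[int]_e) : Prop :=
  sorted (fun a b => le a b && (a != b)) ms /\
  forall m, m \in ms <-> char_exp gens le f n m.

End Defs.

Section Seqs.
Variables (e n : nat) (ms : seq 'rV[int]_e).

Definition Dmat (i : nat) : 'M[int]_(e, e + i) :=
  row_mx (n%:Z)%:M (\matrix_(k < e, j < i) (ms`_j) 0 k).

Definition gcd_minors c (M : 'M[int]_(e, c)) : nat :=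
  \big[gcdn/0%N]_(s : {ffun 'I_e -> 'I_c} |
        [forall j1 : 'I_e, forall j2 : 'I_e, (j1 < j2)%N ==> (s j1 < s j2)%N])
     `|\det (colsub s M)|%N.

(* Dseq i = D_{i+1} in the paper's numbering: D_1 = n^e, D_{i+1} = ... *)
Definition Dseq (i : nat) : nat := gcd_minors (Dmat i).

(* eseq i = e_i = D_i / D_{i+1}, for 1 <= i <= h *)
Definition eseq (i : nat) : nat := (Dseq i.-1 %/ Dseq i)%N.

Definition r0 (k : 'I_e) : 'rV[int]_e := (n%:Z) *: delta_mx 0 k.

(* rseq i = r_{i+1}:  r_1 = m_1,  r_{i+1} = e_i r_i + m_{i+1} - m_i *)
Fixpoint rseq (i : nat) : 'rV[int]_e :=
  if i is i'.+1 then (eseq i)%:Z *: rseq i' + ms`_i - ms`_i' else ms`_0.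

(* sum_k alpha_0^k r_0^k + sum_{j=1}^h alpha_j r_j ; alpha j = alpha_{j+1} *)
Definition semigroup_comb (a0 : 'rV[int]_e) (a : 'I_(size ms) -> nat) : 'rV[int]_e :=
  \sum_(k < e) a0 0 k *: r0 k + \sum_(j < size ms) (a j)%:Z *: rseq j.

End Seqs.
Arguments semigroup_comb [e] n ms a0 a.

(* Let L_t be the lattice spanned by n eps_1, ..., n eps_e, m_1, ..., m_t; the gcd of
   the e x e minors of its spanning matrix is D_(t+1).  As r_t - m_t lies in L_(t-1),
   at the largest index t with alpha_t <> beta_t the difference of the two
   representations gives k m_t in L_(t-1) with 0 < |k| < e_t.  Expanding minors along
   the column m_t shows D_t | k D_(t+1), i.e. e_t | k, a contradiction; what remains,
   n (alpha_0 - beta_0) = 0, forces alpha_0 = beta_0. *)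

From HB Require Import structures.
From mathcomp Require Import all_boot all_order all_algebra.
From mathcomp Require Import boolp classical_sets fsbigop.
From mathcomp Require Import Rstruct.
From mathcomp Require Import perm zify.
Import Order.TTheory GRing.Theory Num.Theory.
Local Open Scope ring_scope.
Set Implicit Arguments.
Unset Strict Implicit.
Unset Printing Implicit Defensive.

Section Series.
Variables (e : nat) (K : fieldType).
Implicit Types (s : series e K) (gens : seq 'rV[rat]_e).

Lemma smul1s s : smul (@sone e K) s = s.
Proof.
apply/funext => p; rewrite /smul -(fsbig_widen [set 0] setT) //.
  by rewrite fsbig_set1 /sone eqxx mul1r subr0.
by move=> a [_ /= a_neq0]; rewrite /sone ifF ?mul0r //; apply/eqP.
Qed.

Lemma smul0s s : smul (@szero e K) s = @szero e K.
Proof. by apply/funext => p; rewrite /smul fsbig1 // => a _; rewrite mul0r. Qed.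

Lemma smuls0 s : smul s (@szero e K) = @szero e K.
Proof. by apply/funext => p; rewrite /smul fsbig1 // => a _; rewrite mulr0. Qed.

Lemma pone_in_spoly gens : in_spoly gens (pone e K).
Proof.
case=> [|k] p /=; last by rewrite /pcoef nth_nil eqxx.
rewrite /pcoef /= /sone; have [-> _|] := eqVneq p 0; last by rewrite eqxx.
exists (fun=> 0); split=> //; rewrite big1 => [|i _]; last by rewrite scale0r.
by apply/matrixP => i j; rewrite !mxE mulr0.
Qed.

Lemma pone_unit gens : is_unit gens (pone e K).
Proof.
exists (pone e K); split; first exact: pone_in_spoly.
case=> [|[|k]]; rewrite /pcoef /pmul /=.
- by apply/funext => p; rewrite big_ord1 smul1s.
- by apply/funext => p; rewrite big_ord_recr big_ord1 /= smuls0 smul0s addr0.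
- by rewrite !nth_default ?size_mkseq.
Qed.

(* A monic polynomial of degree 0 is the unit 1, which is not irreducible. *)
Lemma free_poly_deg_gt0 gens (f : spoly e K) n : free_poly gens f n -> (0 < n)%N.
Proof.
case: n => // -[[size_f lcf] [[_ [not_unit _]] _]]; case: not_unit.
suff -> : f = pone e K by exact: pone_unit.
by case: f size_f lcf => [|a [|]] //= _; rewrite /pcoef /= => ->.
Qed.

End Series.

Section Minors.
Variables (R : comPzRingType) (e c : nat).

Lemma det_alternate_col (A : 'M[R]_e) j1 j2 :
  j1 != j2 -> (forall r, A r j1 = A r j2) -> \det A = 0.
Proof.
by move=> neq_j eq_col; rewrite -det_tr (determinant_alternate neq_j) // => r; rewrite !mxE.
Qed.

Lemma det_colsub_perm (M : 'M[R]_(e, c)) (s : 'I_e -> 'I_c) (p : 'S_e) :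
  \det (colsub (s \o p) M) = (-1) ^+ p * \det (colsub s M).
Proof.
have -> : colsub (s \o p) M = col_perm p (colsub s M) by apply/matrixP => i j; rewrite !mxE.
by rewrite col_permE det_mulmx det_perm odd_permV mulrC.
Qed.

Lemma exists_sorting_perm (s : 'I_e -> 'I_c) :
  exists p : 'S_e, forall i j : 'I_e, (i <= j)%N -> (s (p i) <= s (p j))%N.
Proof.
pose leo := fun a b : 'I_c => (a <= b)%N.
pose u := [tuple s i | i < e].
have /tuple_permP [p sortE] : perm_eq (sort_tuple leo u) u by rewrite perm_sort.
exists p => i j le_ij.
have sorted_u : sorted leo (sort_tuple leo u) by apply: sort_sorted => a b; apply: leq_total.
have nthE k : nth (s (p k)) (sort_tuple leo u) k = s (p k).
  by rewrite sortE -tnth_nth !tnth_mktuple.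
rewrite -[in X in (X <= _)%N]nthE -[in X in (_ <= X)%N](nthE j).
rewrite (set_nth_default (s (p i)) (s (p j))) ?size_tuple //.
have leo_trans : transitive leo by move=> b a d; apply: leq_trans.
by apply: (sorted_leq_nth leo_trans) => //; rewrite inE size_tuple.
Qed.

End Minors.

(* Sorting the selected columns changes the minor only by a sign, and a repeated
   column makes it vanish. *)
Lemma gcd_minors_dvd e c (M : 'M[int]_(e, c)) (s : 'I_e -> 'I_c) :
  (gcd_minors M %| `|\det (colsub s M)|)%N.
Proof.
have [p p_sorted] := exists_sorting_perm s.
rewrite -(abszMsign p) -det_colsub_perm.
have [/injectiveP inj_sp | /injectivePn [j1 [j2 neq_j eq_sj]]] := boolP (injectiveb (s \o p)).
  have -> : colsub (s \o p) M = colsub [ffun j => s (p j)] M.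
    by apply/matrixP => i j; rewrite !mxE ffunE.
  rewrite /gcd_minors; apply: (biggcdn_inf [ffun j => s (p j)] _ (dvdnn _)).
  apply/forallP => j1; apply/forallP => j2; apply/implyP => lt_j.
  rewrite !ffunE ltn_neqAle p_sorted ?andbT; last exact: ltnW.
  by apply: contraTneq lt_j => /val_inj /inj_sp ->; rewrite ltnn.
by rewrite (det_alternate_col neq_j) ?dvdn0 // => r; rewrite !mxE eq_sj.
Qed.

Section CharLattice.
Variables (e n : nat) (ms : seq 'rV[int]_e).

Definition Dgen (i : nat) : 'rV[int]_e :=
  if (i < e)%N then n%:Z *: \row_k ((k : nat) == i)%:R else ms`_(i - e).

Lemma Dgen_r0 (k : 'I_e) : Dgen k = r0 n k.
Proof.
rewrite /Dgen ltn_ord; congr (_ *: _).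
by apply/matrixP => i j; rewrite !mxE (ord1 i).
Qed.

Lemma Dgen_ms j : Dgen (e + j) = ms`_j.
Proof. by rewrite /Dgen ltnNge leq_addr addKn. Qed.

Lemma sum_r0 (a : 'rV[int]_e) : \sum_(k < e) a 0 k *: r0 n k = n%:Z *: a.
Proof.
apply/matrixP => i r; rewrite (ord1 i) summxE mxE (bigD1 r) //= big1 => [|k neq_k].
  by rewrite /r0 !mxE !eqxx mulr1 addr0 mulrC.
by rewrite /r0 !mxE [r == k]eq_sym (negbTE neq_k) andbF !mulr0.
Qed.

Definition Dsel (g : 'I_e -> nat) : 'M[int]_e := \matrix_(r, j) Dgen (g j) 0 r.

Lemma DmatE t r (j : 'I_(e + t)) : Dmat n ms t r j = Dgen j 0 r.
Proof.
rewrite /Dmat /Dgen; case: (splitP j) => [j' jE|j' jE]; rewrite jE.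
  by rewrite (_ : j = lshift t j') ?row_mxEl ?mxE ?ltn_ord ?mulr_natr //; apply: val_inj.
rewrite (_ : j = rshift e j') ?row_mxEr ?mxE /= ?ltnNge ?leq_addr ?addKn //.
exact: val_inj.
Qed.

Lemma colsub_Dmat t (s : 'I_e -> 'I_(e + t)) :
  colsub s (Dmat n ms t) = Dsel (fun j => s j).
Proof. by apply/matrixP => r j; rewrite mxE [RHS]mxE DmatE. Qed.

Lemma Dseq_dvd_det t g : (forall j, g j < e + t)%N -> (Dseq n ms t %| \det (Dsel g))%Z.
Proof.
move=> g_lt; rewrite dvdzE /=.
have -> : Dsel g = colsub (fun j => Ordinal (g_lt j)) (Dmat n ms t) by rewrite colsub_Dmat.
exact: gcd_minors_dvd.
Qed.

Lemma Dseq_gt0 t : (0 < n)%N -> (0 < Dseq n ms t)%N.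
Proof.
move=> n_gt0; have := @Dseq_dvd_det t (fun j => j) (fun j => ltn_addr t (ltn_ord j)).
have -> : Dsel (fun j => j) = (n%:Z)%:M.
  by apply/matrixP => r j; rewrite !mxE /Dgen ltn_ord !mxE mulr_natr.
rewrite det_scalar dvdzE abszX /=; apply: dvdn_gt0.
by rewrite expn_gt0 n_gt0.
Qed.

Lemma Dseq_dvd_prev t : (Dseq n ms t.+1 %| Dseq n ms t)%N.
Proof.
apply/dvdn_biggcdP => s _; rewrite colsub_Dmat.
have s_lt j : (s j < e + t.+1)%N by rewrite addnS ltnS ltnW.
by have := Dseq_dvd_det s_lt; rewrite dvdzE.
Qed.

(* Spanned by the columns of [Dmat n ms t], whose e x e minors have gcd
   [Dseq n ms t], i.e. D_(t+1) in the paper; [ms`_j] is m_(j+1). *)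
Definition lattice t (v : 'rV[int]_e) : Prop :=
  exists c : nat -> int, v = \sum_(i < e + t) c i *: Dgen i.

Lemma lattice0 t : lattice t 0.
Proof. by exists (fun=> 0); rewrite big1 // => i _; rewrite scale0r. Qed.

Lemma latticeD t u v : lattice t u -> lattice t v -> lattice t (u + v).
Proof.
move=> [c ->] [c' ->]; exists (fun i => c i + c' i).
by rewrite -big_split; apply: eq_bigr => i _; rewrite scalerDl.
Qed.

Lemma latticeZ t z v : lattice t v -> lattice t (z *: v).
Proof.
move=> [c ->]; exists (fun i => z * c i).
by rewrite scaler_sumr; apply: eq_bigr => i _; rewrite scalerA.
Qed.

Lemma latticeN t v : lattice t v -> lattice t (- v).
Proof. by rewrite -scaleN1r; apply: latticeZ. Qed.

Lemma lattice_sum t (I : finType) (P : pred I) (F : I -> 'rV[int]_e) :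
  (forall i, P i -> lattice t (F i)) -> lattice t (\sum_(i | P i) F i).
Proof. by move=> F_lat; apply: big_ind => //; [apply: lattice0 | apply: latticeD]. Qed.

Lemma lattice_Dgen t i : (i < e + t)%N -> lattice t (Dgen i).
Proof.
move=> i_lt; exists (fun k => (k == i)%:R).
rewrite (bigD1 (Ordinal i_lt)) //= eqxx scale1r big1 ?addr0 // => k neq_k.
suff /negbTE -> : (k : nat) != i by rewrite scale0r.
by apply: contraNneq neq_k => k_i; apply/eqP/val_inj.
Qed.

Lemma latticeS t v : lattice t v -> lattice t.+1 v.
Proof.
move=> [c ->]; exists (fun i => if (i < e + t)%N then c i else 0).
rewrite addnS big_ord_recr /= ltnn scale0r addr0.
by apply: eq_bigr => i _; rewrite ltn_ord.
Qed.

Lemma lattice_widen t t' v : (t <= t')%N -> lattice t v -> lattice t' v.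
Proof. by move/subnK <-; elim: (t' - t)%N => // d IHd /IHd; apply: latticeS. Qed.

Lemma lattice_scale_n t v : lattice t (n%:Z *: v).
Proof.
rewrite -sum_r0; apply: lattice_sum => k _; apply: latticeZ.
by rewrite -Dgen_r0; apply: lattice_Dgen; rewrite ltn_addr.
Qed.

Lemma lattice_ms t j : (j < t)%N -> lattice t ms`_j.
Proof. by move=> j_lt; rewrite -Dgen_ms; apply: lattice_Dgen; rewrite ltn_add2l. Qed.

Lemma rseq_sub_ms_lattice t : lattice t (rseq n ms t - ms`_t).
Proof.
elim: t => [|t IHt] /=; first by rewrite subrr; apply: lattice0.
set k := (eseq n ms t.+1)%:Z.
have -> : k *: rseq n ms t + ms`_t.+1 - ms`_t - ms`_t.+1 =
          k *: (rseq n ms t - ms`_t) + (k - 1) *: ms`_t.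
  by rewrite scalerBr scalerBl scale1r addrA subrK (addrAC _ ms`_t.+1) addrK.
by apply: latticeD; apply: latticeZ; [apply: latticeS | apply: lattice_ms].
Qed.

Lemma rseq_lattice t j : (j < t)%N -> lattice t (rseq n ms j).
Proof.
move=> j_lt; apply: (@lattice_widen j.+1) => //.
rewrite -(subrK ms`_j (rseq n ms j)).
by apply: latticeD; [apply/latticeS/rseq_sub_ms_lattice | apply: lattice_ms].
Qed.

Definition set_col (g : 'I_e -> nat) j0 x (j : 'I_e) : nat := if j == j0 then x else g j.

Lemma set_col_id g j0 : set_col g j0 (g j0) = g.
Proof. by apply/funext => j; rewrite /set_col; case: eqP => [->|]. Qed.

Lemma det_Dsel_set_col g j0 x :
  \det (Dsel (set_col g j0 x)) = \sum_r Dgen x 0 r * cofactor (Dsel g) r j0.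
Proof.
rewrite (expand_det_col _ j0); apply: eq_bigr => r _; rewrite mxE /set_col eqxx.
congr (_ * (_ * \det _)); apply/matrixP => i j.
by rewrite !mxE eq_sym (negbTE (neq_lift j0 j)).
Qed.

(* A minor uses the column m_(t+1) at most once, and linearly; replacing k m_(t+1)
   by its expansion in the first e + t columns leaves minors of [Dmat n ms t]. *)
Lemma Dseq_dvd_scaled_det t k g :
  (forall j, g j <= e + t)%N -> lattice t (k *: ms`_t) ->
  (Dseq n ms t %| k * \det (Dsel g))%Z.
Proof.
move=> g_le [c kmsE].
have [/existsP [j0 /eqP gj0] | /existsPn g_lt] := boolP [exists j, g j == (e + t)%N];
  last by apply/dvdz_mull/Dseq_dvd_det => j; rewrite ltn_neqAle g_le g_lt.
have [/existsP [j1 /andP [neq_j /eqP gj1]] | /existsPn g_once] :=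
  boolP [exists j1, (j1 != j0) && (g j1 == (e + t)%N)].
  by rewrite (det_alternate_col neq_j) ?mulr0 // => r; rewrite !mxE gj1 gj0.
have set_col_dvd i : (i < e + t)%N -> (Dseq n ms t %| \det (Dsel (set_col g j0 i)))%Z.
  move=> i_lt; apply: Dseq_dvd_det => j; rewrite /set_col; case: eqP => // /eqP neq_j.
  by rewrite ltn_neqAle g_le andbT; have := g_once j; rewrite neq_j.
have kgenE r : k * Dgen (e + t) 0 r = \sum_(i < e + t) c i * Dgen i 0 r.
  have -> : k * Dgen (e + t) 0 r = (k *: ms`_t) 0 r by rewrite Dgen_ms mxE.
  rewrite kmsE summxE.
  by apply: eq_bigr => i _; rewrite mxE.
have detE : \det (Dsel g) = \sum_r Dgen (e + t) 0 r * cofactor (Dsel g) r j0.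
  by rewrite -det_Dsel_set_col -gj0 set_col_id.
rewrite detE mulr_sumr.
under eq_bigr => r _ do rewrite mulrA kgenE mulr_suml.
rewrite exchange_big /=; apply: rpred_sum => i _.
under eq_bigr => r _ do rewrite -mulrA.
by rewrite -mulr_sumr -det_Dsel_set_col; apply/dvdz_mull/set_col_dvd.
Qed.

Lemma Dseq_dvd_scaled_Dseq t k :
  lattice t (k *: ms`_t) -> (Dseq n ms t %| `|k| * Dseq n ms t.+1)%N.
Proof.
move=> k_lat; rewrite {2}/Dseq /gcd_minors.
apply: (big_ind (fun x => Dseq n ms t %| `|k| * x)%N).
- by rewrite muln0 dvdn0.
- by move=> x y x_dvd y_dvd; rewrite muln_gcdr dvdn_gcd x_dvd y_dvd.
move=> s _; rewrite -abszM colsub_Dmat.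
have s_le j : (s j <= e + t)%N by rewrite -ltnS -addnS ltn_ord.
by have := Dseq_dvd_scaled_det s_le k_lat; rewrite dvdzE.
Qed.

Hypothesis n_gt0 : (0 < n)%N.

Lemma eseq_dvd_lattice_coef t k :
  lattice t (k *: ms`_t) -> (eseq n ms t.+1 %| `|k|)%N.
Proof.
move/Dseq_dvd_scaled_Dseq; rewrite /eseq /= -{1}(divnK (Dseq_dvd_prev t)).
by rewrite dvdn_pmul2r ?Dseq_gt0.
Qed.

Lemma lattice_coef_eq0 t k :
  (`|k| < eseq n ms t.+1)%N -> lattice t (k *: ms`_t) -> k = 0.
Proof.
move=> k_lt /eseq_dvd_lattice_coef e_dvd; apply/eqP; rewrite -absz_eq0; apply/eqP.
have [//|k_gt0] := posnP `|k|%N.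
by have := dvdn_leq k_gt0 e_dvd; rewrite leqNgt k_lt.
Qed.

Section Combination.
Variables (d0 : 'rV[int]_e) (d : 'I_(size ms) -> int).
Hypothesis d_lt : forall j, (`|d j| < eseq n ms j.+1)%N.
Hypothesis comb_eq0 : n%:Z *: d0 + \sum_j d j *: rseq n ms j = 0.

Lemma top_coef_eq0 (t : 'I_(size ms)) :
  (forall j : 'I_(size ms), (t < j)%N -> d j = 0) -> d t = 0.
Proof.
move=> d_top; apply: (lattice_coef_eq0 (d_lt t)).
have dt_lat : lattice t (d t *: rseq n ms t).
  move: comb_eq0; rewrite (bigD1 t) //= addrCA => /eqP; rewrite addr_eq0 => /eqP ->.
  apply/latticeN/latticeD; first exact: lattice_scale_n.
  apply: lattice_sum => j neq_j; case: (ltngtP j t) => [j_lt|t_lt|/val_inj j_t].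
  - by apply/latticeZ/rseq_lattice.
  - by rewrite d_top // scale0r; apply: lattice0.
  - by rewrite j_t eqxx in neq_j.
have -> : d t *: ms`_t = d t *: rseq n ms t - d t *: (rseq n ms t - ms`_t).
  by rewrite scalerBr opprB addrC subrK.
by apply: latticeD dt_lat _; apply/latticeN/latticeZ/rseq_sub_ms_lattice.
Qed.

Lemma comb_coef_eq0 j : d j = 0.
Proof.
apply/eqP/negPn/negP => dj_neq0.
case: (@arg_maxnP _ j (fun i => d i != 0) val dj_neq0) => t dt_neq0 t_max.
apply/(negP dt_neq0)/eqP/top_coef_eq0 => i t_lt; apply/eqP/negPn/negP => di_neq0.
by have /= := t_max i di_neq0; rewrite leqNgt t_lt.
Qed.

Lemma comb_r0_eq0 : d0 = 0.
Proof.
move: comb_eq0; rewrite big1 => [|j _]; last by rewrite comb_coef_eq0 scale0r.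
have n_neq0 : n%:Z != 0 by rewrite eqz_nat -lt0n.
by rewrite addr0 => /eqP; rewrite scalemx_eq0 (negbTE n_neq0) => /eqP.
Qed.

End Combination.

Lemma semigroup_comb_inj alpha0 beta0 (alpha beta : 'I_(size ms) -> nat) :
  (forall j, alpha j < eseq n ms j.+1)%N -> (forall j, beta j < eseq n ms j.+1)%N ->
  semigroup_comb n ms alpha0 alpha = semigroup_comb n ms beta0 beta ->
  alpha0 = beta0 /\ alpha = beta.
Proof.
move=> a_lt b_lt /eqP; rewrite -subr_eq0 /semigroup_comb !sum_r0 => /eqP comb_eq0.
pose d j := (alpha j)%:Z - (beta j)%:Z.
have d_lt j : (`|d j| < eseq n ms j.+1)%N by have := a_lt j; have := b_lt j; rewrite /d; lia.
have d_comb : n%:Z *: (alpha0 - beta0) + \sum_j d j *: rseq n ms j = 0.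
  rewrite -[RHS]comb_eq0 opprD addrACA -scalerBr -sumrB.
  by under [in RHS]eq_bigr => j _ do rewrite -scalerBl.
split; first by apply/eqP; rewrite -subr_eq0 (comb_r0_eq0 d_lt d_comb).
apply/funext => j; apply/eqP; rewrite -eqz_nat -subr_eq0.
by rewrite -/(d j) (comb_coef_eq0 d_lt d_comb).
Qed.

End CharLattice.

Theorem mainTheorem12 (K : closedFieldType) (e : nat) (gens : seq 'rV[rat]_e)
    (le : rel 'rV[int]_e) (f : spoly e K) (n : nat) (ms : seq 'rV[int]_e)
    (alpha0 beta0 : 'rV[int]_e) (alpha beta : 'I_(size ms) -> nat) :
  [pchar K] =i pred0 ->
  line_free gens ->
  additive_total_order le ->
  compatible_order gens le ->
  free_poly gens f n ->
  char_exps gens le f n ms ->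
  (forall j : 'I_(size ms), (alpha j < eseq n ms j.+1)%N) ->
  (forall j : 'I_(size ms), (beta j < eseq n ms j.+1)%N) ->
  semigroup_comb n ms alpha0 alpha = semigroup_comb n ms beta0 beta ->
  alpha0 = beta0 /\ alpha = beta.
Proof.
move=> _ _ _ _ /free_poly_deg_gt0 n_gt0 _.
exact: semigroup_comb_inj.
Qed.
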